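(* Let $\lambda>0$ and let $D$ be an edge-minimal $\lambda$-counterexample. Let $S \subseteq V(D)$ be a set of vertices such that $N_1^+(S)$ is non-empty. Then $d_2^+(S) < \lambda\, d_1^+(S)$.
   Context: All digraphs are finite oriented simple graphs: no loops, no multiple edges, and no directed 2-cycles. For vertices $u,v$ of a digraph $D$, $d(u,v)$ is the length of a shortest directed path from $u$ to $v$, with the convention that $d(v,v)$ is the length of a shortest directed cycle through $v$ (not $0$). $N_k^+(v)$ is the set of vertices $u$ with $d(v,u)=k$, and $d_k^+(v)=|N_k^+(v)|$. For a set of vertices $S$, $N_k^+(S)$ is the set of vertices $u$ with $\min_{s\in S} d(s,u)=k$ (so $S$ may intersect $N_k^+(S)$), and $d_k^+(S)=|N_k^+(S)|$. A digraph $D$ is a $\lambda$-counterexample if $d_2^+(v) < \lambda d_1^+(v)$ for every vertex $v$ of $D$. It is an edge-minimal $\lambda$-counterexample if no digraph obtained from $D$ by deleting one or more edges (keeping all vertices) is a $\lambda$-counterexample. *)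

From HB Require Import structures.
From mathcomp Require Import all_boot all_order all_algebra.
Set Implicit Arguments. Unset Strict Implicit. Unset Printing Implicit Defensive.
Import Order.TTheory GRing.Theory Num.Theory.

Definition oriented_simple (T : finType) (e : rel T) : Prop :=
  (forall x, ~~ e x x) /\ (forall x y, e x y -> ~~ e y x).

Fixpoint walk (T : finType) (e : rel T) (k : nat) (x y : T) : bool :=
  match k with
  | 0 => x == y
  | k'.+1 => [exists z, e x z && walk e k' z y]
  end.

(* For u <> v this is the length of a shortest directed path; for u = v it is
   the length of a shortest directed cycle through v (a shortest positive
   closed walk is a cycle), matching the paper's convention d(v,v) != 0. *)
Definition dist_is (T : finType) (e : rel T) (u v : T) (k : nat) : bool :=
  [&& 0 < k, walk e k u v & [forall j : 'I_k, (0 < j) ==> ~~ walk e j u v]].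

Definition Nout (T : finType) (e : rel T) (k : nat) (v : T) : {set T} :=
  [set u | dist_is e v u k].

(* N_k^+(S): vertices u with min_{s in S} d(s,u) = k. *)
Definition NoutS (T : finType) (e : rel T) (k : nat) (S : {set T}) : {set T} :=
  [set u | [&& 0 < k,
              [exists s in S, walk e k s u] &
              [forall s in S, forall j : 'I_k, (0 < j) ==> ~~ walk e j s u]]].

Local Open Scope ring_scope.

Definition counterexample (R : realFieldType) (lam : R) (T : finType) (e : rel T)
  : Prop :=
  forall v : T, (#|Nout e 2 v|%:R : R) < lam * (#|Nout e 1 v|%:R).

Definition edge_minimal_counterexample (R : realFieldType) (lam : R)
  (T : finType) (e : rel T) : Prop :=
  counterexample lam e /\
  forall e' : rel T,
    (forall x y, e' x y -> e x y) ->
    (exists x y, e x y && ~~ e' x y) ->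
    ~ counterexample lam e'.

(* Write [g(A) = |N^+(A) \ A|] for the exterior out-neighbourhood size, so that
   [d_2^+(S) = g(N^+(S))] and [d_1^+(S) = |N^+(S)|]; call [A] sparse when
   [g(A) < lam |A|].  The function [g] is submodular, since [|N^+(A) u A|] is.
   In an edge-minimal counterexample every out-neighbourhood [N^+(x)] is sparse,
   while every proper subset [A] of [N^+(x)] satisfies [g(A) >= lam |A|]:
   otherwise deleting the edges from [x] to [N^+(x) \ A] would leave a smaller
   counterexample.  Submodularity then makes sparseness stable under union with
   an out-neighbourhood, and [N^+(S)] is the union of the [N^+(s)], [s] in [S]. *)
From HB Require Import structures.
From mathcomp Require Import all_boot all_order all_algebra.
From mathcomp Require Import lra.
Import Order.TTheory GRing.Theory Num.Theory.
Set Implicit Arguments. Unset Strict Implicit.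

Section OutNeighbourhoods.
Variables (T : finType) (r : rel T).

Definition succ_set (A : {set T}) : {set T} := [set y | [exists a in A, r a y]].

Lemma succ_set1 (v : T) : succ_set [set v] = [set y | r v y].
Proof.
apply/setP => u; rewrite !inE; apply/existsP/idP => [[s]|rvu].
- by rewrite inE => /andP[/eqP-> ].
- by exists v; rewrite inE eqxx.
Qed.

Lemma succ_setU (P Q : {set T}) : succ_set (P :|: Q) = succ_set P :|: succ_set Q.
Proof.
apply/setP => u; rewrite !inE; apply/existsP/orP.
- by case=> a /andP[]; rewrite inE => /orP[] ha rau; [left|right];
    apply/existsP; exists a; rewrite ha rau.
- by case=> /existsP[a /andP[ha rau]]; exists a; rewrite inE ha rau ?orbT.
Qed.

Lemma succ_setS (P Q : {set T}) : P \subset Q -> succ_set P \subset succ_set Q.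
Proof.
move=> /subsetP sPQ; apply/subsetP => u; rewrite !inE => /existsP[a /andP[ha rau]].
by apply/existsP; exists a; rewrite sPQ.
Qed.

Lemma walk_1 (x y : T) : walk r 1 x y = r x y.
Proof.
apply/existsP/idP => [[z /andP[rxz /eqP<-]] //|rxy].
by exists y; rewrite rxy eqxx.
Qed.

Lemma walk_2 (x y : T) : walk r 2 x y = [exists z, r x z && r z y].
Proof.
rewrite -[LHS]/[exists z, r x z && walk r 1 z y].
by apply: eq_existsb => z; rewrite walk_1.
Qed.

Lemma NoutS_1 (S : {set T}) : NoutS r 1 S = succ_set S.
Proof.
apply/setP => u; rewrite !inE; apply/idP/idP.
- case/and3P => _ /existsP[s /andP[hs]]; rewrite walk_1 => rsu _.
  by apply/existsP; exists s; rewrite hs.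
- case/existsP => s /andP[hs rsu]; apply/and3P; split => //.
  + by apply/existsP; exists s; rewrite hs walk_1.
  + by apply/forallP => s'; apply/implyP => _; apply/forallP => -[[|j] //].
Qed.

Lemma NoutS_2 (S : {set T}) :
  NoutS r 2 S = succ_set (succ_set S) :\: succ_set S.
Proof.
apply/setP => u; rewrite !inE; apply/idP/idP.
- case/and3P => _ /existsP[s /andP[hs]]; rewrite walk_2.
  case/existsP => z /andP[rsz rzu] /forallP no_short.
  apply/andP; split.
  + apply/existsP => -[s' /andP[hs' rs'u]].
    move/implyP: (no_short s') => /(_ hs') /forallP /(_ (@Ordinal 2 1 isT)).
    by rewrite walk_1 rs'u.
  + by apply/existsP; exists z; rewrite rzu andbT inE; apply/existsP; exists s; rewrite hs.
- case/andP => not_succ /existsP[z /andP[]]; rewrite inE.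
  case/existsP => s /andP[hs rsz] rzu.
  apply/and3P; split => //.
  + by apply/existsP; exists s; rewrite hs walk_2; apply/existsP; exists z; rewrite rsz.
  + apply/forallP => s'; apply/implyP => hs'; apply/forallP => j.
    case: j => [[|[|j]] //] hj.
    rewrite walk_1 /=; apply: contra not_succ => rs'u.
    by apply/existsP; exists s'; rewrite hs'.
Qed.

Lemma Nout_NoutS (k : nat) (v : T) : Nout r k v = NoutS r k [set v].
Proof.
apply/setP => u; rewrite !inE /dist_is; congr [&& _, _ & _].
- apply/idP/existsP => [|[s]]; first by exists v; rewrite inE eqxx.
  by rewrite inE => /andP[/eqP-> ].
- apply/forallP/forallP => [no_short s|no_short j].
  + by apply/implyP; rewrite inE => /eqP->; apply/forallP.
  + by move/implyP: (no_short v) => /(_ (set11 v)) /forallP.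
Qed.

Definition boundary (A : {set T}) : nat := #|succ_set A :\: A|.

Lemma boundaryE (A : {set T}) : (boundary A + #|A|)%N = #|succ_set A :|: A|.
Proof.
by rewrite -(cardsID A (succ_set A :|: A)) addnC setIC setKU setDUl setDv setU0.
Qed.

(* Only the closed neighbourhood [succ_set A :|: A] matters, and it is a union
   morphism that is monotone on intersections. *)
Lemma boundary_submod (P Q : {set T}) :
  (boundary (P :|: Q) + boundary (P :&: Q) <= boundary P + boundary Q)%N.
Proof.
rewrite -(leq_add2r (#|P| + #|Q|)) -{1}cardsUI.
rewrite [X in (X <= _)%N]addnACA [X in (_ <= X)%N]addnACA !boundaryE.
have -> : succ_set (P :|: Q) :|: (P :|: Q) =
          (succ_set P :|: P) :|: (succ_set Q :|: Q) by rewrite succ_setU setUACA.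
rewrite -[X in (_ <= X)%N]cardsUI leq_add2l; apply: subset_leq_card.
by rewrite subsetI !setUSS ?succ_setS ?subsetIl ?subsetIr.
Qed.

End OutNeighbourhoods.

Lemma succ_set_subrel (T : finType) (r r' : rel T) (A : {set T}) :
  subrel r r' -> succ_set r A \subset succ_set r' A.
Proof.
move=> rr'; apply/subsetP => u; rewrite !inE => /existsP[a /andP[ha rau]].
by apply/existsP; exists a; rewrite ha rr'.
Qed.

Local Open Scope ring_scope.

Definition sparse (R : realFieldType) (lam : R) (T : finType) (r : rel T)
  (A : {set T}) : bool :=
  (boundary r A)%:R < lam * #|A|%:R.

Lemma counterexampleE (R : realFieldType) (lam : R) (T : finType) (r : rel T) :
  counterexample lam r <-> forall v, sparse lam r (succ_set r [set v]).
Proof.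
by split => hr v; move: (hr v); rewrite /sparse /boundary !Nout_NoutS NoutS_1 NoutS_2.
Qed.

Section EdgeMinimal.
Variables (R : realFieldType) (lam : R) (T : finType) (e : rel T).
Hypothesis e_irrefl : forall x, ~~ e x x.
Hypothesis e_min : edge_minimal_counterexample lam e.

Lemma sparse_succ1 (x : T) : sparse lam e (succ_set e [set x]).
Proof. exact: (counterexampleE lam e).1 e_min.1 x. Qed.

Definition restrict_out (s : T) (A : {set T}) : rel T :=
  fun x z => if x == s then z \in A else e x z.

Lemma not_sparse_proper_succ1 (s : T) (A : {set T}) :
  A \proper succ_set e [set s] -> ~~ sparse lam e A.
Proof.
case/properP => sAN [y]; rewrite succ_set1 inE => esy yA.
set e' := restrict_out s A.
have e'_sub : subrel e' e.
  move=> x z; rewrite /e' /restrict_out; case: eqP => [-> zA|//].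
  by move/subsetP: sAN => /(_ z zA); rewrite succ_set1 inE.
have e'_drops : exists x z, e x z && ~~ e' x z.
  by exists s, y; rewrite /e' /restrict_out eqxx esy.
apply/negP => sparseA; apply: (e_min.2 e' e'_sub e'_drops).
apply/counterexampleE => v; rewrite !succ_set1.
have [->|vs] := eqVneq v s.
- have -> : [set y | e' s y] = A by apply/setP => u; rewrite inE /e' /restrict_out eqxx.
  (* [s \notin A] since [e] has no loops, so [e'] agrees with [e] on edges out of [A]. *)
  rewrite /sparse /boundary; suff -> : succ_set e' A = succ_set e A by [].
  apply/setP => u; rewrite !inE; apply: eq_existsb => a.
  case aA: (a \in A) => //=; rewrite /e' /restrict_out; case: eqP => // as_.
  by move/subsetP: sAN => /(_ a aA); rewrite succ_set1 inE as_ (negbTE (e_irrefl s)).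
- have Ne'v : [set y | e' v y] = [set y | e v y].
    by apply/setP => u; rewrite !inE /e' /restrict_out (negbTE vs).
  have := sparse_succ1 v; rewrite /sparse /boundary succ_set1 Ne'v -succ_set1.
  apply: le_lt_trans; rewrite ler_nat.
  exact/subset_leq_card/setSD/succ_set_subrel.
Qed.

Lemma sparseU_succ1 (P : {set T}) (x : T) :
  P = set0 \/ sparse lam e P -> sparse lam e (P :|: succ_set e [set x]).
Proof.
set Q := succ_set e [set x].
case=> [->|sparseP]; first by rewrite set0U sparse_succ1.
have [sQP|nsQP] := boolP (Q \subset P); first by rewrite (setUidPl sQP).
have PIQ : ~~ sparse lam e (P :&: Q).
  apply/not_sparse_proper_succ1/properP; split; first exact: subsetIr.
  by case/subsetPn: nsQP => y yQ yP; exists y; rewrite // inE negb_and yP.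
move: sparseP PIQ (sparse_succ1 x); rewrite /sparse -/Q -leNgt => sparseP PIQ sparseQ.
have card_mod : lam * #|P :|: Q|%:R + lam * #|P :&: Q|%:R =
                lam * #|P|%:R + lam * #|Q|%:R by rewrite -!mulrDr -!natrD cardsUI.
have := boundary_submod e P Q; rewrite -(ler_nat R) !natrD.
lra.
Qed.

Lemma sparse_succ (S : {set T}) :
  succ_set e S = set0 \/ sparse lam e (succ_set e S).
Proof.
elim: {S}_.+1 {-2}S (ltnSn #|S|) => // n IH S.
have [->|[x xS]] := set_0Vmem S.
  by left; apply/setP => u; rewrite !inE; apply/existsP => -[a]; rewrite inE.
rewrite ltnS (cardsD1 x) xS => lt_S_n; right.
by rewrite -(setD1K xS) setUC succ_setU; apply/sparseU_succ1/IH.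
Qed.

End EdgeMinimal.

Theorem lemma1 (R : realFieldType) (lam : R) (T : finType) (e : rel T)
  (hlam : 0 < lam) (hD : oriented_simple e)
  (hmin : edge_minimal_counterexample lam e)
  (S : {set T}) (hS : NoutS e 1 S != set0) :
  (#|NoutS e 2 S|%:R : R) < lam * (#|NoutS e 1 S|%:R).
Proof.
rewrite NoutS_1 in hS; rewrite NoutS_2 NoutS_1.
by case: (sparse_succ hD.1 hmin S) => // empty; rewrite empty eqxx in hS.
Qed.
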